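(* Let $k\ge 4$ and $n>2k$ be integers, and let $$\mathcal C=\mathcal A_3(n,k)=\Big\{A\in\binom{[n]}{k}: 1\in A,\ A\cap\{2,3,4\}\neq\varnothing\Big\}\cup\Big\{A\in\binom{[n]}{k}:\{2,3,4\}\subset A\Big\},$$ and let $\mathcal S_1=\{A\in\binom{[n]}{k}: 1\in A\}$. Then $$|\mathcal D(\mathcal C)|=5\sum_{i=0}^{k-2}\binom{n-4}{i}+3\sum_{i=0}^{k-3}\binom{n-4}{i},\qquad |\mathcal D(\mathcal S_1)|-|\mathcal D(\mathcal C)|=\binom{n-4}{k-1}-\binom{n-3}{k-2}.$$ In particular, if $(n-k-1)(n-k-2)<(n-3)(k-1)$ (equivalently $n^2-(3k+2)n+k^2+6k-1<0$), then $\mathcal C$ is an intersecting family with $|\mathcal D(\mathcal C)|>\sum_{0\le\ell<k}\binom{n-1}{\ell}$.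
   Context: $[n]=\{1,\dots,n\}$; $\binom{[n]}{k}$ is the family of all $k$-element subsets of $[n]$. $\mathcal D(\mathcal F):=\{F\setminus F' : F,F'\in\mathcal F\}$. Note $|\mathcal D(\mathcal S_1)|=\sum_{0\le\ell<k}\binom{n-1}{\ell}$. *)

(* Ground set [n] = {1,...,n} is modelled by 'I_n = {0,...,n-1}
   via the relabelling i |-> i-1 (so element 1 is value 0, {2,3,4} is {1,2,3}). *)
From mathcomp Require Import all_boot all_order all_algebra.
Set Implicit Arguments. Unset Strict Implicit. Unset Printing Implicit Defensive.

Definition has_val (n : nat) (A : {set 'I_n}) (i : nat) : bool :=
  [exists x in A, val x == i].

Definition diff_family (n : nat) (F : {set {set 'I_n}}) : {set {set 'I_n}} :=
  [set F1 :\: F2 | F1 in F, F2 in F].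

Definition S1 (n k : nat) : {set {set 'I_n}} :=
  [set A : {set 'I_n} | (#|A| == k) && has_val A 0].

Definition A3 (n k : nat) : {set {set 'I_n}} :=
  [set A : {set 'I_n} | (#|A| == k) &&
     ((has_val A 0 && [|| has_val A 1, has_val A 2 | has_val A 3])
      || [&& has_val A 1, has_val A 2 & has_val A 3])].

Definition intersecting (n : nat) (F : {set {set 'I_n}}) : Prop :=
  forall A B, A \in F -> B \in F -> A :&: B != set0.

(* Both families are trace families: F belongs to S_1 (resp. C) iff |F| = k and
   the trace F :&: Q lies in a fixed family P of subsets of Q, where Q = {1}
   (resp. Q = {1,2,3,4}).  For a trace family, G is a difference F \ F' exactly
   when G :&: Q = a \ b for traces a, b in P and r = |G \ Q| obeys three linear
   inequalities, which say that F and F' can be completed to size k outside Q.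
   For C these collapse to r < K(G :&: Q), with K(t) = k-1 for the five traces
   {}, {1}, {2}, {3}, {4}, K(t) = k-2 for {2,3}, {2,4}, {3,4}, and K(t) = 0 for
   the remaining eight, which are themselves traces of C.  Counting the G with
   a given trace gives the formula, Pascal's rule rewrites the binomial sums of
   D(S_1) in terms of C(n-4, .), and the final comparison is
   C(n-4, k-1) < C(n-3, k-2), whose ratio is (n-k-1)(n-k-2) / ((n-3)(k-1)). *)

From mathcomp Require Import all_boot all_order all_algebra.
From mathcomp Require Import zify.

Set Implicit Arguments.
Unset Strict Implicit.
Unset Printing Implicit Defensive.

Section Subsets.

Variable T : finType.
Implicit Types A B F G X t : {set T}.

Lemma exists_subset_card B j :
  j <= #|B| -> exists2 S : {set T}, S \subset B & #|S| = j.
Proof.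
move=> le_j_B; have : 0 < #|[set S : {set T} | S \subset B & #|S| == j]|.
  by rewrite cards_draws bin_gt0.
by case/card_gt0P=> S; rewrite inE => /andP[sSB /eqP cS]; exists S.
Qed.

Lemma card_subsets_by_card B (p : pred nat) :
  #|[set S : {set T} | (S \subset B) && p #|S|]| =
  \sum_(i < #|B|.+1 | p i) 'C(#|B|, i).
Proof.
under eq_bigr => i _ do rewrite -cards_draws.
rewrite -[LHS]sum1_card.
rewrite (partition_big (fun S : {set T} => inord #|S| : 'I_#|B|.+1)
                       (fun i : 'I_#|B|.+1 => p i)) => [|S].
  apply: eq_bigr => i pi; rewrite -[RHS]sum1_card; apply: eq_bigl => S.
  rewrite !inE; have [sSB|] //= := boolP (S \subset B).
  have le_S_B : #|S| < #|B|.+1 by rewrite ltnS subset_leq_card.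
  apply/andP/eqP => [[_ /eqP <-]|eSi]; first by rewrite inordK.
  by split; [rewrite eSi | apply/eqP/val_inj; rewrite /= inordK ?eSi].
by rewrite inE => /andP[sSB pS]; rewrite inordK // ltnS subset_leq_card.
Qed.

Lemma big_powersetU1 (R : Type) (idx : R) (op : Monoid.com_law idx)
    x A (f : {set T} -> R) :
  x \notin A ->
  \big[op/idx]_(t in powerset (x |: A)) f t =
  op (\big[op/idx]_(t in powerset A) f t)
     (\big[op/idx]_(t in powerset A) f (x |: t)).
Proof.
move=> xNA; rewrite (big_setID [set t : {set T} | x \in t]) Monoid.mulmC /=.
have xNt t : t \subset A -> x \notin t.
  by move=> stA; apply: contra xNA => /(subsetP stA).
have -> : powerset (x |: A) :\: [set t : {set T} | x \in t] = powerset A.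
  apply/setP=> t; rewrite !inE; apply/andP/idP => [[xNt' stxA]|stA].
    apply/subsetP=> y yt; case/setU1P: (subsetP stxA y yt) => [exy|//].
    by move: yt; rewrite exy (negPf xNt').
  by rewrite xNt // (subset_trans stA) ?subsetUr.
have -> : powerset (x |: A) :&: [set t : {set T} | x \in t] =
          [set x |: u | u in powerset A].
  apply/setP=> t; rewrite !inE; apply/andP/imsetP => [[stxA xt]|[u]].
    by exists (t :\ x); rewrite ?setD1K // inE subDset.
  by rewrite inE => suA ->; rewrite setU11 setUS.
rewrite big_imset // => t1 t2; rewrite !inE => s1 s2.
move/(congr1 (fun t => t :\ x)).
by rewrite !setU1K ?xNt.
Qed.

Variable Q : {set T}.

Lemma setIU_split A X : A \subset Q -> X \subset ~: Q -> (A :|: X) :&: Q = A.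
Proof.
rewrite -disjoints_subset => sAQ /disjoint_setI0 XQ0.
by rewrite setIUl (setIidPl sAQ) XQ0 setU0.
Qed.

Lemma setDU_split A X : A \subset Q -> X \subset ~: Q -> (A :|: X) :\: Q = X.
Proof.
rewrite -disjoints_subset -setD_eq0 => /eqP AQ0 /setDidPl XQ.
by rewrite setDUl AQ0 XQ set0U.
Qed.

Lemma cardsU_split A X :
  A \subset Q -> X \subset ~: Q -> #|A :|: X| = #|A| + #|X|.
Proof.
by move=> sAQ sXQ; rewrite -(cardsID Q) setIU_split ?setDU_split.
Qed.

Lemma setDI_trace F1 F2 : (F1 :\: F2) :&: Q = (F1 :&: Q) :\: (F2 :&: Q).
Proof.
by apply/setP=> x; rewrite !inE; case: (x \in Q); rewrite ?andbF ?andbT.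
Qed.

Lemma setDD_outside F1 F2 : (F1 :\: F2) :\: Q = (F1 :\: Q) :\: (F2 :\: Q).
Proof.
by apply/setP=> x; rewrite !inE; case: (x \in Q); rewrite ?andbF ?andbT.
Qed.

Lemma card_trace_eq t (p : pred nat) : t \subset Q ->
  #|[set G : {set T} | (G :&: Q == t) && p #|G :\: Q|]| =
  \sum_(i < #|~: Q|.+1 | p i) 'C(#|~: Q|, i).
Proof.
move=> stQ; rewrite -card_subsets_by_card.
rewrite -[RHS](card_in_imset (f := fun R => t :|: R)) => [|R1 R2]; last first.
  rewrite !inE => /andP[sR1 _] /andP[sR2 _] e12.
  by rewrite -(setDU_split stQ sR1) -(setDU_split stQ sR2) e12.
apply: eq_card => G; rewrite inE; apply/andP/imsetP => [[/eqP tG pG]|[R]].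
  exists (G :\: Q); last by rewrite -tG setID.
  by rewrite inE pG subDset setUCr subsetT.
by rewrite inE => /andP[sRQ pR] ->; rewrite setIU_split ?setDU_split.
Qed.

Lemma card_by_trace (p : {set T} -> pred nat) :
  #|[set G : {set T} | p (G :&: Q) #|G :\: Q|]| =
  \sum_(t in powerset Q) \sum_(i < #|~: Q|.+1 | p t i) 'C(#|~: Q|, i).
Proof.
rewrite -[LHS]sum1_card.
rewrite (partition_big (fun G => G :&: Q) (fun t => t \in powerset Q)).
  2: by move=> G _; rewrite powersetE subsetIr.
apply: eq_bigr => t; rewrite powersetE => stQ.
rewrite -(card_trace_eq (p t) stQ) -sum1_card.
by apply: eq_bigl => G; rewrite !inE andbC; case: eqP => [->|].
Qed.

End Subsets.

Section TraceFamily.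

Variables (T : finType) (Q : {set T}) (P : pred {set T}) (k : nat).
Implicit Types a b G : {set T}.

Definition trace_family := [set F : {set T} | (#|F| == k) && P (F :&: Q)].

Lemma realize_trace_diff a b G :
    a \subset Q -> b \subset Q -> G :&: Q = a :\: b ->
    #|G :\: Q| + #|a| <= k -> k + #|G :\: Q| <= #|~: Q| + #|b| ->
    #|b| <= #|a| + #|G :\: Q| ->
  exists F1 F2 : {set T},
    [/\ #|F1| = k, #|F2| = k, F1 :&: Q = a, F2 :&: Q = b & G = F1 :\: F2].
Proof.
move=> saQ sbQ tG le_a le_b le_ba; set R := G :\: Q in le_a le_b le_ba.
have sRQ : R \subset ~: Q by rewrite subDset setUCr subsetT.
have [S sS cS] :
    exists2 S : {set T}, S \subset ~: Q :\: R & #|S| = k - #|a| - #|R|.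
  by apply: exists_subset_card; rewrite cardsDS //; lia.
have [Y sY cY] :
    exists2 Y : {set T}, Y \subset ~: Q :\: R :\: S & #|Y| = #|a| + #|R| - #|b|.
  by apply: exists_subset_card; rewrite cardsDS // cardsDS // cS; lia.
have card_F1 : #|a| + (#|R| + #|S|) = k by rewrite cS; lia.
have card_F2 : #|b| + (#|S| + #|Y|) = k by rewrite cS cY; lia.
move: sS sY; rewrite !subsetD => /andP[sSQ dSR] /andP[/andP[sYQ dYR] dYS].
have cardsU_disj (A B : {set T}) : [disjoint A & B] -> #|A :|: B| = #|A| + #|B|.
  by move=> dAB; rewrite cardsU (disjoint_setI0 dAB) cards0 subn0.
have sRSQ : R :|: S \subset ~: Q by rewrite subUset sRQ.
have sSYQ : S :|: Y \subset ~: Q by rewrite subUset sSQ.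
exists (a :|: (R :|: S)), (b :|: (S :|: Y)); split.
- by rewrite (cardsU_split saQ sRSQ) cardsU_disj 1?disjoint_sym.
- by rewrite (cardsU_split sbQ sSYQ) cardsU_disj 1?disjoint_sym.
- exact: setIU_split.
- exact: setIU_split.
rewrite -[LHS](setID G Q) tG -/R -[RHS](setID _ Q) setDI_trace setDD_outside.
rewrite (setIU_split saQ sRSQ) (setIU_split sbQ sSYQ).
rewrite (setDU_split saQ sRSQ) (setDU_split sbQ sSYQ) setDUl.
have /eqP -> : S :\: (S :|: Y) == set0 by rewrite setD_eq0 subsetUl.
rewrite setU0 (setDidPl (_ : [disjoint R & S :|: Y])) //.
rewrite disjoints_subset setCU subsetI -!disjoints_subset.
by rewrite !(disjoint_sym R) dSR.
Qed.

Lemma trace_diff_bounds (F1 F2 : {set T}) : #|F1| = k -> #|F2| = k ->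
  [/\ #|(F1 :\: F2) :\: Q| + #|F1 :&: Q| <= k,
      k + #|(F1 :\: F2) :\: Q| <= #|~: Q| + #|F2 :&: Q|
    & #|F2 :&: Q| <= #|F1 :&: Q| + #|(F1 :\: F2) :\: Q|].
Proof.
move=> cF1 cF2; rewrite setDD_outside.
have := cardsID Q F1; have := cardsID Q F2; rewrite cF1 cF2.
set X := F2 :\: Q; set Y := F1 :\: Q.
have le_XY : #|X :|: Y| <= #|~: Q|.
  by rewrite subset_leq_card // subUset !subDset !setUCr !subsetT.
have le_IX : #|Y :&: X| <= #|X| by rewrite subset_leq_card ?subsetIr.
have le_IY : #|Y :&: X| <= #|Y| by rewrite subset_leq_card ?subsetIl.
have := cardsD Y X; have := cardsU X Y; rewrite setIC.
by split; lia.
Qed.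

Lemma diff_trace_familyP G :
  reflect (exists a b, [/\ [/\ a \subset Q, b \subset Q, P a & P b],
             G :&: Q = a :\: b, #|G :\: Q| + #|a| <= k,
             k + #|G :\: Q| <= #|~: Q| + #|b| & #|b| <= #|a| + #|G :\: Q|])
    (G \in [set F1 :\: F2 | F1 in trace_family, F2 in trace_family]).
Proof.
apply: (iffP imset2P)
    => [[F1 F2] | [a [b [[saQ sbQ Pa Pb] tG le_a le_b le_ba]]]].
  rewrite !inE => /andP[/eqP cF1 P1] /andP[/eqP cF2 P2] ->.
  have [le_a le_b le_ba] := trace_diff_bounds cF1 cF2.
  by exists (F1 :&: Q), (F2 :&: Q); rewrite setDI_trace !subsetIr.
have [F1 [F2 [cF1 cF2 tF1 tF2 ->]]] :=
  realize_trace_diff saQ sbQ tG le_a le_b le_ba.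
by exists F1 F2; rewrite // /trace_family inE ?cF1 ?cF2 ?tF1 ?tF2 eqxx.
Qed.

End TraceFamily.

Lemma has_valE n (F : {set 'I_n}) (x : 'I_n) : has_val F x = (x \in F).
Proof.
apply/existsP/idP => [[y /andP[yF /eqP/val_inj <-]] // | xF].
by exists x; rewrite xF eqxx.
Qed.

Section CorePoints.

Variable m : nat.
Implicit Types a b t F G : {set 'I_m.+4}.

Definition e0 : 'I_m.+4 := @Ordinal m.+4 0 isT.
Definition e1 : 'I_m.+4 := @Ordinal m.+4 1 isT.
Definition e2 : 'I_m.+4 := @Ordinal m.+4 2 isT.
Definition e3 : 'I_m.+4 := @Ordinal m.+4 3 isT.

Definition Q4 : {set 'I_m.+4} := [set x : 'I_m.+4 | x < 4].

Lemma Q4E : Q4 = e0 |: (e1 |: (e2 |: [set e3])).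
Proof. by apply/setP => -[[|[|[|[|i]]]] lt_i]; rewrite !inE. Qed.

Lemma card_sub_Q4 t :
  t \subset Q4 -> #|t| = (e0 \in t) + (e1 \in t) + (e2 \in t) + (e3 \in t).
Proof.
move=> stQ; rewrite -sum1_card.
rewrite (eq_bigl (fun x => (x \in Q4) && (x \in t))) => [|x].
  by rewrite big_mkcondr Q4E !big_setU1 ?big_set1 ?inE //= !addnA.
by rewrite andb_idl // => /(subsetP stQ).
Qed.

Lemma card_Q4C : #|~: Q4| = m.
Proof.
have := cardsC Q4; rewrite card_ord card_sub_Q4 // !inE /=; lia.
Qed.

Lemma setI_Q4_eq G t : t \subset Q4 ->
    e0 \in G = (e0 \in t) -> e1 \in G = (e1 \in t) ->
    e2 \in G = (e2 \in t) -> e3 \in G = (e3 \in t) ->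
  G :&: Q4 = t.
Proof.
move=> stQ E0 E1 E2 E3; apply/setP => x; rewrite inE.
have [xQ|xNQ] := boolP (x \in Q4); last first.
  by rewrite andbF; apply/esym/negbTE; apply: contra xNQ => /(subsetP stQ).
by move: xQ; rewrite Q4E !inE andbT => /or4P[] /eqP->.
Qed.

Definition A3_trace a :=
  (e0 \in a) && [|| e1 \in a, e2 \in a | e3 \in a]
  || [&& e1 \in a, e2 \in a & e3 \in a].

Lemma A3E k : A3 m.+4 k = trace_family Q4 A3_trace k.
Proof.
apply/setP => F; rewrite /trace_family !inE (has_valE F e0) (has_valE F e1).
by rewrite (has_valE F e2) (has_valE F e3) /A3_trace !inE /= !andbT.
Qed.

Lemma S1E k : S1 m.+4 k = trace_family [set e0] (fun a => e0 \in a) k.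
Proof.
by apply/setP => F; rewrite /trace_family !inE (has_valE F e0) eqxx andbT.
Qed.


Lemma A3_trace_meet a b : A3_trace a -> A3_trace b -> a :&: b != set0.
Proof.
move=> Ha Hb; apply/set0Pn.
have : [|| (e0 \in a) && (e0 \in b), (e1 \in a) && (e1 \in b),
           (e2 \in a) && (e2 \in b) | (e3 \in a) && (e3 \in b)].
  move: Ha Hb; rewrite /A3_trace.
  by move: (e0 \in a) (e1 \in a) (e2 \in a) (e3 \in a) (e0 \in b) (e1 \in b)
           (e2 \in b) (e3 \in b); do 8!case.
by case/or4P => /andP[xa xb]; [exists e0 | exists e1 | exists e2 | exists e3];
   rewrite inE xa xb.
Qed.

Lemma A3_trace_setD a b : A3_trace a -> A3_trace b -> ~~ A3_trace (a :\: b).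
Proof.
rewrite /A3_trace !inE.
by move: (e0 \in a) (e1 \in a) (e2 \in a) (e3 \in a) (e0 \in b) (e1 \in b)
         (e2 \in b) (e3 \in b); do 8!case.
Qed.

Lemma A3_trace_card a : a \subset Q4 -> A3_trace a -> 2 <= #|a|.
Proof.
move=> saQ; rewrite card_sub_Q4 // /A3_trace.
by move: (e0 \in a) (e1 \in a) (e2 \in a) (e3 \in a); do 4!case.
Qed.

Lemma A3_trace_card_setD a b : a \subset Q4 -> A3_trace a -> A3_trace b ->
  #|a :\: b| = 2 -> 3 <= #|a|.
Proof.
move=> saQ; have sabQ : a :\: b \subset Q4.
  by rewrite (subset_trans (subsetDl a b)).
rewrite !card_sub_Q4 // /A3_trace !inE.
by move: (e0 \in a) (e1 \in a) (e2 \in a) (e3 \in a) (e0 \in b) (e1 \in b)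
         (e2 \in b) (e3 \in b); do 8!case.
Qed.

Definition A3_diff_bound k t :=
  if A3_trace t then 0 else if #|t| == 2 then k - 2 else k - 1.

Lemma A3_diff_bound_gt k a b r :
    a \subset Q4 -> A3_trace a -> A3_trace b -> r + #|a| <= k ->
  r < A3_diff_bound k (a :\: b).
Proof.
move=> saQ Pa Pb le_a; rewrite /A3_diff_bound (negbTE (A3_trace_setD Pa Pb)).
have := A3_trace_card saQ Pa.
by case: eqP => [/(A3_trace_card_setD saQ Pa Pb)|_]; lia.
Qed.

Lemma A3_diff_witness k G : 4 <= k -> 2 * k < m.+4 ->
    #|G :\: Q4| < A3_diff_bound k (G :&: Q4) ->
  exists a b, [/\ [/\ a \subset Q4, b \subset Q4, A3_trace a & A3_trace b],
    G :&: Q4 = a :\: b, #|G :\: Q4| + #|a| <= k,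
    k + #|G :\: Q4| <= #|~: Q4| + #|b| & #|b| <= #|a| + #|G :\: Q4|].
Proof.
rewrite card_Q4C; set r := #|G :\: Q4| => le4k lt2km.
have witness a b : a \subset Q4 -> b \subset Q4 -> A3_trace a -> A3_trace b ->
    e0 \in G = (e0 \in a :\: b) -> e1 \in G = (e1 \in a :\: b) ->
    e2 \in G = (e2 \in a :\: b) -> e3 \in G = (e3 \in a :\: b) ->
    r + #|a| <= k -> k + r <= m + #|b| -> #|b| <= #|a| + r ->
  exists a b, [/\ [/\ a \subset Q4, b \subset Q4, A3_trace a & A3_trace b],
    G :&: Q4 = a :\: b, r + #|a| <= k, k + r <= m + #|b| & #|b| <= #|a| + r].
  move=> saQ sbQ Pa Pb E0 E1 E2 E3 le_a le_b le_ba; exists a, b; split=> //.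
  by apply: setI_Q4_eq; rewrite // (subset_trans (subsetDl a b)).
rewrite /A3_diff_bound card_sub_Q4 ?subsetIr // [A3_trace _]/A3_trace.
rewrite !inE /= !andbT.
(* For the trace {e0}, b must be {e1, e2, e3}, so r = 0 forces #|a| = 3. *)
case E0: (e0 \in G); case E1: (e1 \in G); case E2: (e2 \in G);
  case E3: (e3 \in G) => //= lt_r.
all: [> have [r0|r_pos] := posnP r;
     [ apply: (witness [set e0; e1; e2] [set e1; e2; e3])
     | apply: (witness [set e0; e1] [set e1; e2; e3]) ]
 | apply: (witness [set e0; e1; e2] [set e0; e3])
 | apply: (witness [set e0; e1; e3] [set e0; e2])
 | apply: (witness [set e0; e1] [set e0; e2])
 | apply: (witness [set e0; e2; e3] [set e0; e1])
 | apply: (witness [set e0; e2] [set e0; e1])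
 | apply: (witness [set e0; e3] [set e0; e1])
 | apply: (witness [set e0; e1] [set e0; e1]) ].
all: rewrite ?card_sub_Q4.
all: rewrite ?subUset ?sub1set /A3_trace ?E0 ?E1 ?E2 ?E3 ?inE //=; lia.
Qed.

Lemma diff_A3E k : 4 <= k -> 2 * k < m.+4 ->
  diff_family (A3 m.+4 k) =
  [set G | #|G :\: Q4| < A3_diff_bound k (G :&: Q4)].
Proof.
move=> le4k lt2km; apply/setP => G; rewrite inE /diff_family A3E.
apply/diff_trace_familyP/idP => [[a [b [[saQ _ Pa Pb] -> le_a _ _]]]|].
  exact: A3_diff_bound_gt.
exact: A3_diff_witness.
Qed.

Lemma sum_powerset_Q4 (h : bool -> bool -> bool -> bool -> nat) :
  \sum_(t in powerset Q4) h (e0 \in t) (e1 \in t) (e2 \in t) (e3 \in t) =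
  \sum_(b0 : bool) \sum_(b1 : bool) \sum_(b2 : bool) \sum_(b3 : bool)
    h b0 b1 b2 b3.
Proof.
rewrite Q4E -[[set e3]]setU0 !big_powersetU1 ?inE // powerset0 !big_set1.
by rewrite !big_bool !in_setU1 !in_set0 /=; lia.
Qed.

Lemma sum_A3_diff_bound k (f : nat -> nat) :
  \sum_(t in powerset Q4) f (A3_diff_bound k t) =
  5 * f (k - 1) + 3 * f (k - 2) + 8 * f 0.
Proof.
under eq_bigr => t /[1!powersetE] stQ do rewrite /A3_diff_bound card_sub_Q4 //.
by rewrite /A3_trace (sum_powerset_Q4 (fun b0 b1 b2 b3 : bool =>
  f (if b0 && [|| b1, b2 | b3] || [&& b1, b2 & b3] then 0
     else if b0 + b1 + b2 + b3 == 2 then k - 2 else k - 1))) !big_bool /=; lia.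
Qed.

Lemma card_diff_A3 k : 4 <= k -> 2 * k < m.+4 ->
  #|diff_family (A3 m.+4 k)| =
  5 * \sum_(0 <= i < k - 1) 'C(m, i) + 3 * \sum_(0 <= i < k - 2) 'C(m, i).
Proof.
move=> le4k lt2km; rewrite diff_A3E //.
rewrite (card_by_trace Q4 (fun t i => i < A3_diff_bound k t)) card_Q4C.
rewrite (sum_A3_diff_bound k (fun K => \sum_(i < m.+1 | i < K) 'C(m, i))).
have sum_ltn K : K <= m.+1 ->
    \sum_(i < m.+1 | i < K) 'C(m, i) = \sum_(0 <= i < K) 'C(m, i).
  by move=> le_K; rewrite big_mkord (big_ord_widen _ _ le_K).
by rewrite !sum_ltn ?[\sum_(0 <= i < 0) _]big_geq //; lia.
Qed.

Lemma A3_intersecting k : intersecting (A3 m.+4 k).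
Proof.
move=> F1 F2; rewrite A3E !inE => /andP[_ P1] /andP[_ P2].
apply: contraNneq (A3_trace_meet P1 P2) => F12_0.
by rewrite setIACA setIid F12_0 set0I.
Qed.

Lemma diff_S1E k : 0 < k -> 2 * k < m.+4 ->
  diff_family (S1 m.+4 k) =
  [set G | (G :&: [set e0] == set0) && (#|G :\: [set e0]| < k)].
Proof.
move=> k_gt0 lt2km; apply/setP => G; rewrite inE /diff_family S1E.
have cardQ1C : #|~: [set e0]| = m.+3 by rewrite cardsC1 card_ord.
have is_e0 a : a \subset [set e0] -> e0 \in a -> a = [set e0].
  by move=> saQ e0a; apply/eqP; rewrite eqEsubset saQ sub1set.
apply/diff_trace_familyP/andP
    => [[a [b [[saQ sbQ Pa Pb] -> le_a _ _]]] | [/eqP G0 lt_r]].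
  rewrite (is_e0 a saQ Pa) (is_e0 b sbQ Pb) setDv cards1 eqxx in le_a *.
  by split=> //; rewrite -addn1.
exists [set e0]; exists [set e0].
rewrite setDv G0 cards1 cardQ1C !inE eqxx subxx.
set r := #|_ :\: _| in lt_r *.
by split=> //; lia.
Qed.

Lemma card_diff_S1 k : 0 < k -> 2 * k < m.+4 ->
  #|diff_family (S1 m.+4 k)| = \sum_(0 <= i < k) 'C(m.+3, i).
Proof.
move=> k_gt0 lt2km; rewrite diff_S1E //.
rewrite (card_trace_eq (fun i => i < k) (sub0set [set e0])).
rewrite cardsC1 card_ord big_mkord.
by rewrite (big_ord_widen _ _ (_ : k <= m.+4)) //; lia.
Qed.

End CorePoints.

Lemma sum_binS N K :
  \sum_(0 <= i < K.+1) 'C(N.+1, i) =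
  \sum_(0 <= i < K.+1) 'C(N, i) + \sum_(0 <= i < K) 'C(N, i).
Proof.
rewrite big_nat_recl // [in RHS]big_nat_recl // !bin0 -addnA -big_split /=.
by congr (_ + _); apply: eq_bigr => i _; rewrite binS.
Qed.

Lemma mul_bin_predS N j :
  N * j.+1 * 'C(N.-1, j.+1) = (N - j) * (N - j.+1) * 'C(N, j).
Proof.
by rewrite mulnAC mul_bin_down -mulnA [_ * j.+1]mulnC mul_bin_left mulnCA mulnA.
Qed.

Lemma ltn_bin_predS N j :
  j <= N -> (N - j) * (N - j.+1) < N * j.+1 -> 'C(N.-1, j.+1) < 'C(N, j).
Proof.
move=> le_jN lt_coef; have C_gt0 : 0 < 'C(N, j) by rewrite bin_gt0.
have := mul_bin_predS N j; nia.
Qed.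

Theorem mainTheorem11 (n k : nat) (hk : 4 <= k) (hn : 2 * k < n) :
  #|diff_family (A3 n k)| =
    (5 * (\sum_(0 <= i < k - 1) 'C(n - 4, i)) +
     3 * (\sum_(0 <= i < k - 2) 'C(n - 4, i)))%N
  /\ ((#|diff_family (S1 n k)|%:Z - #|diff_family (A3 n k)|%:Z)%R =
      ('C(n - 4, k - 1)%:Z - 'C(n - 3, k - 2)%:Z)%R)
  /\ ((n - k - 1) * (n - k - 2) < (n - 3) * (k - 1) ->
      intersecting (A3 n k) /\
      (\sum_(0 <= l < k) 'C(n - 1, l) < #|diff_family (A3 n k)|)%N).
Proof.
have [m en] : exists m, n = m.+4 by exists (n - 4); lia.
have [K ek] : exists K, k = K.+3 by exists (k - 3); lia.
subst n k; rewrite card_diff_A3 // card_diff_S1 //.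
have -> : m.+4 - 4 = m by lia.
rewrite !subSS !subn0 !sum_binS !big_nat_recr //= binS.
split=> //; split; first by lia.
move=> lt_coef; split; first exact: A3_intersecting.
suff : 'C(m, K.+2) < 'C(m.+1, K.+1) by rewrite binS; lia.
apply: ltn_bin_predS; first by lia.
by move: lt_coef; rewrite subn1 subn2 !subnS.
Qed.
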